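(* Let $k\ge0$ be an integer. Define $$P^*(x)=(1+x)^4\big(1+(2k+4)x^2\big)^{2k+1},$$ let $A^*(x)$ be the polynomial of degree at most $2k+3$ obtained by truncating the power series of $(1+x)^2\big(1+(2k+4)x^2\big)^{(2k+1)/2}$ at degree $2k+3$, i.e. $(1+x)^2(1+(2k+4)x^2)^{(2k+1)/2}=A^*(x)+O(x^{2k+4})$ as $x\to0$, and let $Q^*=(A^* )^2$. Then $$P^*(x)-Q^*(x)=O(x^{2k+5})\quad\text{as }x\to0,$$ i.e. $x^{2k+5}$ divides $P^*-Q^*$. Equivalently, with $P(x)=(x+1)^4(x^2+2k+4)^{2k+1}$ and $A(x)=x^{2k+3}A^*(1/x)$, one has $\deg\big(P-A^2\big)\le 2k+1$.
   Context: For a polynomial $F$ of degree $d$, its reciprocal is $F^*(x)=x^dF(1/x)$. This gives the Davenport–Zannier pair (black vertices of degrees $4,2k+1,2k+1$, all white vertices of degree 2, total weight $4k+6$) for the weighted tree of series $J$. *)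

From HB Require Import structures.
From mathcomp Require Import all_boot all_order all_algebra.
Set Implicit Arguments. Unset Strict Implicit. Unset Printing Implicit Defensive.
Import Order.TTheory GRing.Theory Num.Theory.
Local Open Scope ring_scope.

Definition gbinom (a : rat) (j : nat) : rat :=
  (\prod_(i < j) (a - i%:R)) / (j`!)%:R.

(* Coefficient of x^n in the binomial power series (1 + c x^2)^a
   = sum_j gbinom a j * c^j * x^(2j). *)
Definition binser_sq_coef (c a : rat) (n : nat) : rat :=
  if odd n then 0 else gbinom a n./2 * c ^+ n./2.

Definition binser_sq_trunc (c a : rat) (N : nat) : {poly rat} :=
  \poly_(n < N) binser_sq_coef c a n.

Definition Pstar (k : nat) : {poly rat} :=
  ('X + 1) ^+ 4 * (1 + (2 * k + 4)%:R *: 'X ^+ 2) ^+ (2 * k + 1).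

Definition Astar (k : nat) : {poly rat} :=
  take_poly (2 * k + 4)
    (('X + 1) ^+ 2 *
       binser_sq_trunc (2 * k + 4)%:R ((2 * k + 1)%:R / 2) (2 * k + 4)).

Definition Qstar (k : nat) : {poly rat} := Astar k ^+ 2.

From mathcomp Require Import all_boot all_order all_algebra.
From mathcomp Require Import ring zify.
Set Implicit Arguments. Unset Strict Implicit. Unset Printing Implicit Defensive.
Import GRing.Theory Num.Theory.
Local Open Scope ring_scope.

(* Write E = 1 + c X^2 with c = 2k+4 and a = (2k+1)/2, and let T be the
   truncation of E^a at degree 2k+4.  Both E^(2k+1) and T^2 satisfy, modulo
   X^(2k+4), the first-order equation E y' = (2k+1) 2c X y, which has a unique
   power-series solution with y(0) = 1; hence T^2 = E^(2k+1) mod X^(2k+5).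
   The choice of c makes the coefficients of E^a in degrees 2k+2 and 2k+4
   opposite, so (1+X)^2 T and its truncation A agree modulo X^(2k+5) as well,
   and P* - A^2 = ((1+X)^2 T - A)((1+X)^2 T + A) - (1+X)^4 (T^2 - E^(2k+1)). *)

Lemma dvdXnP (R : fieldType) (m : nat) (p : {poly R}) :
  reflect (forall i, (i < m)%N -> p`_i = 0) ('X^m %| p).
Proof.
apply: (iffP idP) => [/dvdpP [q ->] i lt_im | p_lo]; first by rewrite coefMXn lt_im.
rewrite -(poly_take_drop m p) dvdp_addr ?dvdp_mull //.
suff -> : take_poly m p = 0 by rewrite dvdp0.
by apply/polyP => i; rewrite coef_take_poly coef0; case: ifP => // /p_lo.
Qed.

Section BinomialODE.
Variable R : numFieldType.
Implicit Types (c b : R) (p q : {poly R}).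

Definition binom_diffop c b p : {poly R} :=
  (1 + c%:P * 'X^2) * p^`() - b%:P * ('X * p).

Lemma coef_binom_diffop0 c b p : (binom_diffop c b p)`_0 = p`_1.
Proof.
rewrite /binom_diffop mulrDl mul1r coefB coefD -mulrA !coefCM coefXnM coefXM.
by rewrite coef_deriv /= !mulr0 subr0 addr0.
Qed.

Lemma coef_binom_diffopS c b p i :
  (binom_diffop c b p)`_i.+1 = p`_i.+2 * i.+2%:R + (c * i%:R - b) * p`_i.
Proof.
rewrite /binom_diffop mulrDl mul1r coefB coefD -mulrA !coefCM coefXnM coefXM.
rewrite !coef_deriv /=; case: i => [|i] /=; first by ring.
by rewrite subn2 /=; ring.
Qed.

Lemma binom_diffopB c b p q :
  binom_diffop c b (p - q) = binom_diffop c b p - binom_diffop c b q.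
Proof. by rewrite /binom_diffop derivB; ring. Qed.

Lemma binom_diffop_sqr c b p :
  binom_diffop c (2 * b) (p ^+ 2) = 2%:R *: p * binom_diffop c b p.
Proof. by rewrite /binom_diffop derivM rmorphM /= -mul_polyC; ring. Qed.

Lemma binom_diffop_exp c n :
  binom_diffop c (n%:R * c * 2) ((1 + c%:P * 'X^2) ^+ n) = 0.
Proof.
case: n => [|n]; first by rewrite /binom_diffop expr0 derivC !rmorphM /= polyC0; ring.
rewrite /binom_diffop deriv_exp /= derivD derivC derivM derivC derivXn /= expr1.
by rewrite !rmorphM /= !rmorph_nat [_ ^+ n.+1]exprS; ring.
Qed.

(* Uniqueness of the solution: the coefficient of X^i.+1 of the operator
   determines p`_i.+2 from p`_i, and its constant term is p`_1. *)
Lemma binom_diffop_dvdXn c b p M :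
  p`_0 = 0 -> 'X^M %| binom_diffop c b p -> 'X^(M.+1) %| p.
Proof.
move=> p0 /dvdXnP Lp_lo; apply/dvdXnP.
suff p_lo i : (i < M)%N -> p`_i = 0 /\ p`_i.+1 = 0.
  by case=> [|i] // /p_lo [].
elim: i => [|i IHi] lt_iM.
  by split=> //; rewrite -(coef_binom_diffop0 c b); apply: Lp_lo.
have [pi pSi] := IHi (ltnW lt_iM); split=> //.
move/eqP: (Lp_lo _ lt_iM); rewrite coef_binom_diffopS pi mulr0 addr0.
by rewrite mulf_eq0 pnatr_eq0 orbF => /eqP.
Qed.

End BinomialODE.

Lemma gbinomS a j : gbinom a j.+1 = gbinom a j * (a - j%:R) / j.+1%:R.
Proof.
rewrite /gbinom big_ord_recr /= factS natrM.
have Sj_neq0 : 1 + j%:R != 0 :> rat by rewrite addrC natr1 pnatr_eq0.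
have fact_neq0 : j`!%:R != 0 :> rat by rewrite pnatr_eq0 -lt0n fact_gt0.
by field; rewrite Sj_neq0 fact_neq0.
Qed.

Section BinomialSeries.
Variables c a : rat.
Local Notation F := (binser_sq_coef c a).

Lemma binser_sq_coef0 : F 0 = 1.
Proof. by rewrite /binser_sq_coef /= /gbinom big_ord0. Qed.

Lemma binser_sq_coef_odd n : odd n -> F n = 0.
Proof. by rewrite /binser_sq_coef => ->. Qed.

Lemma binser_sq_coefSS n : n.+2%:R * F n.+2 = c * (2 * a - n%:R) * F n.
Proof.
rewrite /binser_sq_coef /= negbK; case: ifP => odd_n; first by rewrite !mulr0.
have n2 : n%:R = 2 * n./2%:R :> rat by rewrite -natrM mul2n even_halfK ?odd_n.
rewrite -addn2 natrD n2 gbinomS exprS -addn1 natrD.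
have Sn2_neq0 : 1 + n./2%:R != 0 :> rat by rewrite addrC natr1 pnatr_eq0.
by field.
Qed.

Lemma binom_diffop_binser_sq M :
  'X^M %| binom_diffop c (2 * a * c) (\poly_(n < M.+1) F n).
Proof.
apply/dvdXnP => -[|i] lt_iM.
  by rewrite coef_binom_diffop0 coef_poly ltnS lt_iM binser_sq_coef_odd.
rewrite coef_binom_diffopS !coef_poly ltnS lt_iM ltnS (ltnW (ltnW lt_iM)).
by rewrite mulrC binser_sq_coefSS; ring.
Qed.

Lemma binser_sq_sqr_dvdXn n M : 2 * a = n%:R ->
  'X^(M.+1) %| (\poly_(i < M.+1) F i) ^+ 2 - (1 + c%:P * 'X^2) ^+ n.
Proof.
move=> two_a; apply: (@binom_diffop_dvdXn _ c (n%:R * c * 2)).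
  rewrite -horner_coef0 !hornerE !horner_coef0 coef_poly binser_sq_coef0 /=.
  by rewrite !mulr0 addr0 !expr1n subrr.
rewrite binom_diffopB binom_diffop_exp subr0.
have -> : n%:R * c * 2 = 2 * (2 * a * c) by rewrite -two_a; ring.
by rewrite binom_diffop_sqr dvdp_mull ?binom_diffop_binser_sq.
Qed.

End BinomialSeries.

(* With c = n+2 and 2a = n-1 the recurrence factor c (2a - n) / (n+2) is -1. *)
Lemma binser_sq_coef_opp n a : 2 * a = n%:R - 1 ->
  binser_sq_coef n.+2%:R a n.+2 = - binser_sq_coef n.+2%:R a n.
Proof.
move=> two_a; have := binser_sq_coefSS n.+2%:R a n.
rewrite two_a addrAC subrr add0r mulrN1 mulNr -mulrN.
by apply: mulfI; rewrite pnatr_eq0.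
Qed.

Lemma coef_X1sqM (R : comNzRingType) (p : {poly R}) i :
  (('X + 1) ^+ 2 * p)`_i.+2 = p`_i.+2 + p`_i.+1 *+ 2 + p`_i.
Proof.
have -> : ('X + 1) ^+ 2 * p = p + ('X * p) *+ 2 + 'X^2 * p by ring.
by rewrite !coefD coefXM coefXnM /= subn2 mulr2n.
Qed.

Theorem mainTheorem9 (k : nat) : 'X ^+ (2 * k + 5) %| (Pstar k - Qstar k).
Proof.
set c : rat := (2 * k + 4)%:R; set a : rat := (2 * k + 1)%:R / 2.
set F := binser_sq_coef c a; set E : {poly rat} := 1 + c%:P * 'X^2.
set T : {poly rat} := \poly_(n < (2 * k + 4).+1) F n.
have T2E : 'X^(2 * k + 5) %| T ^+ 2 - E ^+ (2 * k + 1).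
  by rewrite addnS; apply: binser_sq_sqr_dvdXn; rewrite /a mulrC divfK.
have TA : 'X^(2 * k + 5) %| ('X + 1) ^+ 2 * T - Astar k.
  apply/dvdXnP => i lt_i; rewrite coefB /Astar coef_take_poly -/c -/a -/F.
  case: ltnP => [lt_i4 | ge_i4].
    rewrite -coefB -mulrBr; apply: (dvdXnP _ _ _ _ lt_i4); apply/dvdp_mull/dvdXnP.
    by move=> j lt_j4; rewrite coefB !coef_poly lt_j4 ltnS ltnW ?subrr.
  have -> : i = (2 * k + 2).+2 by lia.
  have F_opp : F (2 * k + 2).+2 = - F (2 * k + 2).
    rewrite /F /c (_ : 2 * k + 4 = (2 * k + 2).+2)%N; last by lia.
    by rewrite binser_sq_coef_opp // /a !natrD; field.
  have F_odd : F (2 * k + 2).+1 = 0 by rewrite /F binser_sq_coef_odd //= oddD oddM.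
  rewrite subr0 coef_X1sqM !coef_poly !ifT ?F_opp ?F_odd; try lia.
  by rewrite mul0rn addr0 addNr.
have -> : Pstar k - Qstar k = (('X + 1) ^+ 2 * T - Astar k) *
    (('X + 1) ^+ 2 * T + Astar k) - ('X + 1) ^+ 4 * (T ^+ 2 - E ^+ (2 * k + 1)).
  by rewrite /Pstar /Qstar /E -/c mul_polyC; ring.
by apply: dvdp_sub; [apply: dvdp_mulr | apply: dvdp_mull].
Qed.
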